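(* Let $0\le k\le n$. The number $F(k,n)$ of preference profiles for $n$ men and $n$ women having exactly $k$ pairs of soulmates is \[F(k,n)=\binom{n}{k}^2 k!\,(n-1)!^{2k}\left(\sum_{i=0}^{n-k} (-1)^{i}\binom{n-k}{i}^2 (n-1)!^{2i}\, i!\, n!^{2n-2k-2i}\right).\]
   Context: A preference profile for $n$ (labeled) men and $n$ (labeled) women consists of, for each man, a strict ranking of the women (bijection to $\{1,\dots,n\}$, 1 = favorite), and for each woman, a strict ranking of the men. A man and a woman are soulmates if each ranks the other first; the number of pairs of soulmates of a profile is the number of such man–woman pairs. *)

From mathcomp Require Import all_boot all_algebra all_fingroup.
Set Implicit Arguments. Unset Strict Implicit. Unset Printing Implicit Defensive.

(* A ranking of n items is a bijection 'I_n -> 'I_n (item |-> rank), where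
   rank 0 (i.e. 1 in the paper's 1-based convention) is the favorite. *)
Definition ranking (n : nat) := {perm 'I_n}.

Definition profile (n : nat) := ({ffun 'I_n -> {perm 'I_n}} * {ffun 'I_n -> {perm 'I_n}})%type.

Definition men_pref n (P : profile n) := P.1.
Definition women_pref n (P : profile n) := P.2.

Definition soulmates n (P : profile n) (m w : 'I_n) : bool :=
  (nat_of_ord (men_pref P m w) == 0) && (nat_of_ord (women_pref P w m) == 0).

Definition num_soulmates n (P : profile n) : nat :=
  #|[set mw : 'I_n * 'I_n | soulmates P mw.1 mw.2]|.

Definition F (k n : nat) : nat := #|[set P : profile n | num_soulmates P == k]|.

From mathcomp Require Import all_boot all_algebra all_fingroup.
From mathcomp Require Import zify ring.
Set Implicit Arguments. Unset Strict Implicit. Unset Printing Implicit Defensive.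
Import GRing.Theory.

(* Binomial inversion expresses F(k,n) through the binomial moments
   S_j = \sum_P 'C(#soulmates of P, j).  As a man has at most one soulmate,
   j! S_j counts the profiles P together with an injective j-tuple a of men and
   a j-tuple b of women such that each a_i, b_i are soulmates in P.  For fixed a
   and b the men's and the women's rankings are independent; prescribing the
   favorite of j distinct rankers leaves (n-1)!^j n!^(n-j) families of rankings,
   and none if one ranker must put two distinct women first.  Hence
   S_j = 'C(n,j)^2 j! ((n-1)!^j n!^(n-j))^2, and reindexing the inversion
   formula by i = j - k gives the result. *)

Lemma card_set_sum (T : finType) (p : pred T) : #|[set x | p x]| = \sum_x p x.
Proof. by rewrite -sum1_card big_mkcond; apply: eq_bigr => x _; rewrite inE. Qed.

Lemma mul_bin_bin c j k : k <= j -> 'C(c, j) * 'C(j, k) = 'C(c, k) * 'C(c - k, j - k).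
Proof.
move=> le_kj; have [le_jc|lt_cj] := leqP j c; last first.
  rewrite bin_small // mul0n; have [le_kc|lt_ck] := leqP k c; last by rewrite bin_small.
  by rewrite [X in _ * X]bin_small ?muln0 // ltn_sub2r // (leq_ltn_trans le_kc).
have le_kc := leq_trans le_kj le_jc.
have facts_gt0 : 0 < k`! * (j - k)`! * (c - j)`! by rewrite !muln_gt0 !fact_gt0.
apply/eqP; rewrite -(eqn_pmul2r facts_gt0); apply/eqP.
transitivity c`!; first by rewrite -(bin_fact le_jc) -(bin_fact le_kj); ring.
have sub_sub : c - k - (j - k) = c - j by lia.
by rewrite -(bin_fact le_kc) -(bin_fact (leq_sub2r k le_jc)) sub_sub; ring.
Qed.

Lemma sum_perm_eq n (x y : 'I_n) : \sum_(s : 'S_n) (s x == y : nat) = n.-1`!.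
Proof.
have fiber_eq y' : \sum_(s : 'S_n) (s x == y' : nat) = \sum_(s : 'S_n) (s x == y : nat).
  rewrite (reindex_inj (mulIg (tperm y y'))); apply: eq_bigr => s _.
  by rewrite permM -[y' in _ == y'](tpermL y y') (inj_eq perm_inj).
have fiber_sum : \sum_(y' : 'I_n) \sum_(s : 'S_n) (s x == y' : nat) = n`!.
  rewrite exchange_big -card_Sn -sum1_card; apply: eq_bigr => s _.
  by rewrite (bigD1 (s x)) //= eqxx big1 // => y' /negbTE; rewrite eq_sym => ->.
move: fiber_sum; under eq_bigr do rewrite fiber_eq; clear fiber_eq.
rewrite sum_nat_const card_ord; case: n x y => [[]//|n] x y /=.
by rewrite factS => /eqP; rewrite eqn_pmul2l // => /eqP.
Qed.

Definition top_ranked n (s : 'S_n) (x : 'I_n) : bool := s x == 0 :> nat.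

Lemma sum_perm_top_ranked n (x : 'I_n) : \sum_(s : 'S_n) top_ranked s x = n.-1`!.
Proof.
rewrite -(sum_perm_eq x (Ordinal (leq_ltn_trans (leq0n x) (ltn_ord x)))).
by apply: eq_bigr => s _; rewrite /top_ranked -val_eqE.
Qed.

Lemma top_ranked_inj n (s : 'S_n) x y : top_ranked s x -> top_ranked s y -> x = y.
Proof.
by move=> /eqP sx0 /eqP sy0; apply: (@perm_inj _ s); apply: val_inj; rewrite /= sx0 sy0.
Qed.

Section TopCount.

Variables n j : nat.
Implicit Types a b : 'I_j -> 'I_n.

Definition top_count a b : nat :=
  \sum_(Q : {ffun 'I_n -> 'S_n}) \prod_(i < j) top_ranked (Q (a i)) (b i).

Lemma top_countE a b :
  top_count a b = \prod_(r : 'I_n) \sum_(s : 'S_n) \prod_(i | a i == r) top_ranked s (b i).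
Proof.
rewrite /top_count bigA_distr_bigA; apply: eq_bigr => Q _.
by rewrite (partition_big a xpredT) //=; apply: eq_bigr => r _; apply: eq_bigr => i /eqP ->.
Qed.

Lemma top_count_inj a b : injective a -> top_count a b = n.-1`! ^ j * n`! ^ (n - j).
Proof.
move=> inj_a; rewrite top_countE (bigID (mem (codom a))) /=.
have card_codom_a : #|[pred r | r \in codom a]| = j by rewrite card_codom // card_ord.
have card_codomC : #|[pred r | r \notin codom a]| = n - j.
  by rewrite -{2}card_codom_a -[n in n - _](card_ord n) -(cardC (mem (codom a))) addKn.
rewrite (eq_bigr (fun=> n.-1`!)) => [|r]; last first.
  case/codomP=> i0 ->; rewrite -(sum_perm_top_ranked (b i0)); apply: eq_bigr => s _.
  by rewrite (big_pred1 i0) // => i /=; rewrite (inj_eq inj_a).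
rewrite [X in _ * X](eq_bigr (fun=> n`!)) => [|r r_out]; last first.
  rewrite -card_Sn -sum1_card; apply: eq_bigr => s _.
  by rewrite big_pred0 // => i; apply: contraNF r_out => /eqP <-; rewrite codom_f.
by rewrite !prod_nat_const card_codom_a card_codomC.
Qed.

Lemma top_count_eq0 a b : injective b -> ~~ injectiveb a -> top_count a b = 0.
Proof.
move=> inj_b /injectivePn [i1 [i2 ne12 a12]].
rewrite top_countE (bigD1 (a i1)) //= big1 ?mul0n // => s _.
rewrite (bigD1 i1) //= (bigD1 i2) /=; last by rewrite -a12 eqxx eq_sym ne12.
case top1: (top_ranked s (b i1)); last by rewrite mul0n.
case top2: (top_ranked s (b i2)); last by rewrite mul0n muln0.
by move/negP: ne12; case; apply/eqP/inj_b/(top_ranked_inj top1 top2).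
Qed.

Lemma sum_top_count_sqr a : injective a ->
  \sum_(b : {ffun 'I_j -> 'I_n}) top_count a b * top_count b a
    = n ^_ j * (n.-1`! ^ j * n`! ^ (n - j)) ^ 2.
Proof.
move=> inj_a; rewrite -[in n ^_ j](card_ord n) -[j in _ ^_ j]card_ord -card_inj_ffuns.
rewrite card_set_sum big_distrl /=; apply: eq_bigr => b _.
rewrite (top_count_inj b inj_a); case: (boolP (injectiveb b)) => [/injectiveP inj_b|not_inj_b].
  by rewrite (top_count_inj a inj_b) mul1n.
by rewrite (top_count_eq0 inj_a not_inj_b) !muln0.
Qed.

End TopCount.

Section Soulmates.

Variable n : nat.
Implicit Types (P : profile n) (m w : 'I_n).

Lemma soulmates_uniq P m w w' : soulmates P m w -> soulmates P m w' -> w = w'.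
Proof. by move=> /andP[top_w _] /andP[top_w' _]; apply: top_ranked_inj top_w top_w'. Qed.

Lemma sum_soulmates P m : \sum_w soulmates P m w = [exists w, soulmates P m w].
Proof.
case: existsP => [[w Pmw]|no_w]; last first.
  by rewrite big1 // => w _; case: (boolP (soulmates P m w)) => // Pmw; case: no_w; exists w.
rewrite (bigD1 w) //= Pmw big1 // => w' w'w; case: (boolP (soulmates P m w')) => // Pmw'.
by rewrite (soulmates_uniq Pmw' Pmw) eqxx in w'w.
Qed.

Lemma num_soulmatesE P : num_soulmates P = #|[set m | [exists w, soulmates P m w]]|.
Proof.
rewrite /num_soulmates !card_set_sum; under [RHS]eq_bigr do rewrite -sum_soulmates.
by rewrite pair_bigA.
Qed.

Lemma num_soulmates_le P : num_soulmates P <= n.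
Proof. by rewrite num_soulmatesE -[X in _ <= X]card_ord max_card. Qed.

Lemma ffact_num_soulmates P j : num_soulmates P ^_ j =
  \sum_(a : {ffun 'I_j -> 'I_n} | injectiveb a) \sum_(b : {ffun 'I_j -> 'I_n})
    \prod_i soulmates P (a i) (b i).
Proof.
rewrite num_soulmatesE -[j in _ ^_ j]card_ord -card_inj_ffuns_on card_set_sum.
rewrite [RHS]big_mkcond /=.
apply: eq_bigr => a _; rewrite andbC; case: (injectiveb a) => //=.
rewrite -(bigA_distr_bigA (fun i w => soulmates P (a i) w : nat)) /=.
under eq_bigr do rewrite sum_soulmates.
rewrite -(big_morph nat_of_bool (fun x y => esym (mulnb x y)) (erefl (nat_of_bool true))).
rewrite big_andE.
by congr nat_of_bool; apply/ffun_onP/forallP => a_R i; move: (a_R i); rewrite inE.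
Qed.

Lemma sum_profiles_soulmates j (a b : 'I_j -> 'I_n) :
  \sum_(P : profile n) \prod_i soulmates P (a i) (b i) = top_count a b * top_count b a.
Proof.
rewrite -(pair_bigA _ (fun Q1 Q2 => \prod_i soulmates ((Q1, Q2) : profile n) (a i) (b i))).
rewrite /top_count big_distrl /=; apply: eq_bigr => Q1 _.
rewrite big_distrr /=; apply: eq_bigr => Q2 _.
by rewrite -big_split /=; apply: eq_bigr => i _; rewrite mulnb.
Qed.

Lemma sum_ffact_num_soulmates j : \sum_(P : profile n) num_soulmates P ^_ j
  = (n ^_ j) ^ 2 * (n.-1`! ^ j * n`! ^ (n - j)) ^ 2.
Proof.
under eq_bigr do rewrite ffact_num_soulmates.
rewrite exchange_big /=.
rewrite (eq_bigr (fun=> n ^_ j * (n.-1`! ^ j * n`! ^ (n - j)) ^ 2)) => [|a /injectiveP inj_a].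
  by rewrite sum_nat_const -cardsE card_inj_ffuns !card_ord mulnA.
rewrite -(sum_top_count_sqr inj_a) exchange_big /=; apply: eq_bigr => b _.
exact: sum_profiles_soulmates.
Qed.

Lemma sum_bin_num_soulmates j : \sum_(P : profile n) 'C(num_soulmates P, j)
  = 'C(n, j) ^ 2 * j`! * (n.-1`! ^ j * n`! ^ (n - j)) ^ 2.
Proof.
apply/eqP; rewrite -(eqn_pmul2r (fact_gt0 j)) big_distrl /=; apply/eqP.
under eq_bigr do rewrite bin_ffact.
by rewrite sum_ffact_num_soulmates -bin_ffact; ring.
Qed.

End Soulmates.

Lemma bin_moment_reindex n k i :
  'C(i + k, k) * ('C(n, i + k) ^ 2 * (i + k)`! * (n.-1`! ^ (i + k) * n`! ^ (n - (i + k))) ^ 2)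
  = ('C(n, k) ^ 2 * k`! * n.-1`! ^ (2 * k))
    * ('C(n - k, i) ^ 2 * n.-1`! ^ (2 * i) * i`! * n`! ^ (2 * n - 2 * k - 2 * i)).
Proof.
have choose_split : 'C(n, i + k) * 'C(i + k, k) = 'C(n, k) * 'C(n - k, i).
  by rewrite mul_bin_bin ?leq_addl // addnK.
have fact_split : (i + k)`! = 'C(i + k, k) * k`! * i`!.
  by rewrite -mulnA -(bin_fact (leq_addl i k)) addnK.
have exp_pred_fact : (n.-1`! ^ (i + k)) ^ 2 = n.-1`! ^ (2 * k) * n.-1`! ^ (2 * i).
  by rewrite -expnM -expnD; congr (_ ^ _); lia.
have exp_fact : (n`! ^ (n - (i + k))) ^ 2 = n`! ^ (2 * n - 2 * k - 2 * i).
  by rewrite -expnM; congr (_ ^ _); lia.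
rewrite expnMn exp_pred_fact exp_fact fact_split.
transitivity (('C(n, i + k) * 'C(i + k, k)) ^ 2 * k`! * i`!
  * (n.-1`! ^ (2 * k) * n.-1`! ^ (2 * i) * n`! ^ (2 * n - 2 * k - 2 * i))); first ring.
by rewrite choose_split; ring.
Qed.

Local Open Scope ring_scope.

Lemma sum_alt_bin m N : (m <= N)%N ->
  \sum_(i < N.+1) (-1) ^+ i * ('C(m, i))%:Z = (m == 0)%N%:Z.
Proof.
move=> le_mN; have := exprD1n (-1 : int) m; rewrite addNr expr0n natz => ->.
rewrite (big_ord_widen N.+1 (fun i => (-1) ^+ i *+ 'C(m, i))) // [RHS]big_mkcond /=.
apply: eq_bigr => i _; case: ltnP => [_|lt_mi]; first by rewrite -mulr_natr natz.
by rewrite bin_small // mulr0.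
Qed.

Lemma sum_alt_bin_shift (g : nat -> int) N k : (k <= N)%N ->
  \sum_(j < N.+1) (-1) ^+ (j - k) * ('C(j, k))%:Z * g j
    = \sum_(i < (N - k).+1) (-1) ^+ i * ('C(i + k, k))%N%:Z * g (i + k)%N.
Proof.
move=> le_kN; rewrite -(big_mkord xpredT (fun j => (-1) ^+ (j - k) * ('C(j, k))%:Z * g j)).
rewrite (big_cat_nat (n := k)) ?leqW //=.
rewrite big_nat_cond big1 ?add0r => [|j /andP[/andP[_ lt_jk] _]]; last first.
  by rewrite bin_small // mulr0 mul0r.
by rewrite -{1}[k]add0n big_addn subSn // big_mkord; apply: eq_bigr => i _; rewrite addnK.
Qed.

Lemma sum_alt_bin_bin c k N : (c <= N)%N ->
  \sum_(j < N.+1) (-1) ^+ (j - k) * ('C(j, k))%:Z * ('C(c, j))%:Z = (c == k)%N%:Z.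
Proof.
move=> le_cN; have [lt_ck|le_kc] := ltnP c k.
  rewrite (ltn_eqF lt_ck) big1 // => j _; have [le_jc|lt_cj] := leqP j c.
    by rewrite [in 'C(j, k)]bin_small ?mulr0 ?mul0r // (leq_ltn_trans le_jc).
  by rewrite [in 'C(c, j)]bin_small // mulr0.
rewrite (sum_alt_bin_shift (fun j => ('C(c, j))%:Z)) ?(leq_trans le_kc) //.
under eq_bigr => i _ do
  rewrite -mulrA -PoszM mulnC mul_bin_bin ?leq_addl // addnK PoszM mulrCA.
rewrite -mulr_sumr sum_alt_bin ?leq_sub2r //.
have [->|ne_ck] := eqVneq c k; first by rewrite subnn binn.
by rewrite (_ : (c - k == 0)%N = false) ?mulr0 //; lia.
Qed.

Lemma card_preimage_alt_sum (T : finType) (f : T -> nat) N k : (forall x, f x <= N)%N ->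
  #|[set x | f x == k]|%:Z
    = \sum_(j < N.+1) (-1) ^+ (j - k) * ('C(j, k))%:Z * (\sum_x 'C(f x, j))%:Z.
Proof.
move=> f_le; rewrite card_set_sum -natz natr_sum.
under eq_bigr => x _ do rewrite natz -(sum_alt_bin_bin k (f_le x)).
rewrite exchange_big /=; apply: eq_bigr => j _.
by rewrite -[X in _ = _ * X]natz natr_sum mulr_sumr; apply: eq_bigr => x _; rewrite natz.
Qed.

Theorem mainTheorem3 (k n : nat) (hk : (k <= n)%N) :
  (F k n)%:Z =
    ('C(n, k) ^ 2 * k`! * (n.-1)`! ^ (2 * k))%N%:Z *
    \sum_(i < (n - k).+1)
      (-1) ^+ i * ('C(n - k, i) ^ 2 * (n.-1)`! ^ (2 * i) * i`!
                   * n`! ^ (2 * n - 2 * k - 2 * i))%N%:Z.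
Proof.
rewrite /F (card_preimage_alt_sum k (@num_soulmates_le n)).
under eq_bigr do rewrite sum_bin_num_soulmates.
rewrite (sum_alt_bin_shift
  (fun j => ('C(n, j) ^ 2 * j`! * (n.-1`! ^ j * n`! ^ (n - j)) ^ 2)%N%:Z)) //.
rewrite mulr_sumr; apply: eq_bigr => i _.
by rewrite -mulrA -PoszM bin_moment_reindex PoszM mulrCA.
Qed.
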